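(* Consider the one-species chemostat with constant inlet concentration $s_{in}>0$: $$\dot x=(\mu(s)-D(t)-b)x,\qquad \dot s=D(t)(s_{in}-s)-g(s)x,\qquad (s,x)\in(0,s_{in})\times(0,+\infty).$$ Let $(s^*,x^* )\in(0,s_{in})\times(0,+\infty)$ and $D^*>0$ satisfy $\mu(s^* )=D^*+b$ and $D^*(s_{in}-s^* )=g(s^* )x^*$. Suppose there is a locally Lipschitz $k:(0,s_{in})\times(0,+\infty)\to(0,+\infty)$ with $D^*=k(s^*,x^* )$ such that $(s^*,x^* )$ is globally asymptotically stable for the closed-loop system with $D=k(s,x)$ on $(0,s_{in})\times(0,+\infty)$. Suppose moreover that the system above with the dynamic feedback $D=k(s,z)$, $\dot z=(\mu(s)-D-b)z$, $z\in(0,+\infty)$, is forward complete. Then for every $r>0$, the equilibrium $(s,x,z)=(s^*,x^*,x^* )$ is globally asymptotically stable (on $(0,s_{in})\times(0,+\infty)\times(0,+\infty)$) for the closed-loop system consisting of the chemostat above, the hybrid observer $$\dot z(t)=(\mu(s(t))-D(t)-b)z(t),\ t\in[\tau_i,\tau_{i+1}),\qquad z(\tau_{i+1})=\exp\left(\int_{\tau_i}^{\tau_{i+1}}(\mu(s(w))-D(w)-b)dw\right)\frac{\int_{\tau_i}^{\tau_{i+1}}p(t)q(t)dt}{\int_{\tau_i}^{\tau_{i+1}}q^2(t)dt},\qquad \tau_{i+1}=\tau_i+r,$$ where $p(t)=s(t)-s(\tau_i)-\int_{\tau_i}^t D(w)(s_{in}-s(w))dw$ and $q(t)=-\int_{\tau_i}^t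 g(s(\rho))\exp\left(\int_{\tau_i}^{\rho}(\mu(s(w))-D(w)-b)dw\right)d\rho$, and the feedback $D(t)=k(s(t),z(t))$.
   Context: $\mu,g:[0,+\infty)\to[0,+\infty)$ are continuously differentiable bounded functions with $\mu(0)=g(0)=0$ and $\mu(s)>0$, $g(s)>0$ for $s>0$; $b\ge0$ is a constant. The observer is a hybrid system started at $\tau_0=0$ with arbitrary initial value $z(0)\in(0,+\infty)$; the times $\tau_i=ir$ are the reset instants. Global asymptotic stability means Lyapunov stability together with convergence to the equilibrium of every solution starting in the indicated state space. *)

From Stdlib Require Import Reals Lra.
From Coquelicot Require Import Coquelicot.
Open Scope R_scope.

Definition cont_right (f : R -> R) (t : R) : Prop :=
  filterlim f (at_right t) (locally (f t)).
Definition cont_left (f : R -> R) (t : R) : Prop :=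
  filterlim f (at_left t) (locally (f t)).

Definition C1_on_nonneg (f : R -> R) : Prop :=
  exists df : R -> R,
    (forall s, 0 < s -> is_derive f s (df s)) /\
    filterlim (fun h => (f h - f 0) / h) (at_right 0) (locally (df 0)) /\
    (forall s, 0 <= s -> forall eps, 0 < eps -> exists del, 0 < del /\
       forall y, 0 <= y -> Rabs (y - s) < del -> Rabs (df y - df s) < eps).

Definition admissible_rate (f : R -> R) : Prop :=
  C1_on_nonneg f /\
  (forall s, 0 <= s -> 0 <= f s) /\
  (exists M, forall s, 0 <= s -> f s <= M) /\
  f 0 = 0 /\
  (forall s, 0 < s -> 0 < f s).

Definition dist2 (a1 a2 b1 b2 : R) : R :=
  sqrt ((a1 - b1) ^ 2 + (a2 - b2) ^ 2).
Definition dist3 (a1 a2 a3 b1 b2 b3 : R) : R :=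
  sqrt ((a1 - b1) ^ 2 + (a2 - b2) ^ 2 + (a3 - b3) ^ 2).

Definition in_dom2 (sin s x : R) : Prop := 0 < s < sin /\ 0 < x.

Definition loc_lipschitz2 (sin : R) (k : R -> R -> R) : Prop :=
  forall s0 x0, in_dom2 sin s0 x0 ->
  exists rho L, 0 < rho /\ 0 <= L /\
    forall s1 x1 s2 x2,
      in_dom2 sin s1 x1 -> in_dom2 sin s2 x2 ->
      dist2 s1 x1 s0 x0 < rho -> dist2 s2 x2 s0 x0 < rho ->
      Rabs (k s1 x1 - k s2 x2) <= L * dist2 s1 x1 s2 x2.

Definition conv_to (f : R -> R) (l : R) : Prop :=
  filterlim f (Rbar_locally p_infty) (locally l).

Definition static_sol (mu g : R -> R) (b sin : R) (k : R -> R -> R)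
    (s x : R -> R) : Prop :=
  (forall t, 0 <= t -> in_dom2 sin (s t) (x t)) /\
  (forall t, 0 < t ->
     is_derive s t (k (s t) (x t) * (sin - s t) - g (s t) * x t) /\
     is_derive x t ((mu (s t) - k (s t) (x t) - b) * x t)) /\
  cont_right s 0 /\ cont_right x 0.

Definition GAS_static (mu g : R -> R) (b sin : R) (k : R -> R -> R)
    (ss xs : R) : Prop :=
  (forall eps, 0 < eps -> exists del, 0 < del /\
     forall s x, static_sol mu g b sin k s x ->
       dist2 (s 0) (x 0) ss xs < del ->
       forall t, 0 <= t -> dist2 (s t) (x t) ss xs < eps) /\
  (forall s0 x0, in_dom2 sin s0 x0 ->
     exists s x, static_sol mu g b sin k s x /\ s 0 = s0 /\ x 0 = x0) /\
  (forall s x, static_sol mu g b sin k s x -> conv_to s ss /\ conv_to x xs).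

Definition dyn_sol (mu g : R -> R) (b sin : R) (k : R -> R -> R)
    (s x z : R -> R) : Prop :=
  (forall t, 0 <= t -> in_dom2 sin (s t) (x t) /\ 0 < z t) /\
  (forall t, 0 < t ->
     is_derive s t (k (s t) (z t) * (sin - s t) - g (s t) * x t) /\
     is_derive x t ((mu (s t) - k (s t) (z t) - b) * x t) /\
     is_derive z t ((mu (s t) - k (s t) (z t) - b) * z t)) /\
  cont_right s 0 /\ cont_right x 0 /\ cont_right z 0.

Definition forward_complete_dyn (mu g : R -> R) (b sin : R)
    (k : R -> R -> R) : Prop :=
  forall s0 x0 z0, in_dom2 sin s0 x0 -> 0 < z0 ->
    exists s x z, dyn_sol mu g b sin k s x z /\
      s 0 = s0 /\ x 0 = x0 /\ z 0 = z0.

(** Reset value of the hybrid observer on [a,c], computed from the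
    (continuous versions on [a,c] of the) signals S, Z on that interval,
    with D(w) = k(S w, Z w). *)
Definition observer_reset (mu g : R -> R) (b sin : R) (k : R -> R -> R)
    (S Z : R -> R) (a c : R) : R :=
  let D := fun w => k (S w) (Z w) in
  let E := fun t => exp (RInt (fun w => mu (S w) - D w - b) a t) in
  let p := fun t => S t - S a - RInt (fun w => D w * (sin - S w)) a t in
  let q := fun t => - RInt (fun rho => g (S rho) * E rho) a t in
  E c * RInt (fun t => p t * q t) a c / RInt (fun t => (q t) ^ 2) a c.

(** Solutions on [0,+oo) of the hybrid closed loop: chemostat + hybrid
    observer with reset instants tau_i = i r + feedback D(t) = k(s(t), z(t)).
    On each [tau_i, tau_{i+1}) the signals coincide with functions S, X, Z
    that are continuous on [tau_i, tau_{i+1}] and solve the flow equations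
    on (tau_i, tau_{i+1}); s, x are continuous at tau_{i+1} and z is reset. *)
Definition hybrid_sol (mu g : R -> R) (b sin : R) (k : R -> R -> R) (r : R)
    (s x z : R -> R) : Prop :=
  (forall t, 0 <= t -> in_dom2 sin (s t) (x t) /\ 0 < z t) /\
  forall i : nat,
    let a := INR i * r in
    let c := INR (S i) * r in
    exists Sf Xf Zf : R -> R,
      (forall t, a <= t <= c -> in_dom2 sin (Sf t) (Xf t) /\ 0 < Zf t) /\
      (forall t, a < t < c ->
         is_derive Sf t (k (Sf t) (Zf t) * (sin - Sf t) - g (Sf t) * Xf t) /\
         is_derive Xf t ((mu (Sf t) - k (Sf t) (Zf t) - b) * Xf t) /\
         is_derive Zf t ((mu (Sf t) - k (Sf t) (Zf t) - b) * Zf t)) /\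
      cont_right Sf a /\ cont_right Xf a /\ cont_right Zf a /\
      cont_left Sf c /\ cont_left Xf c /\ cont_left Zf c /\
      (forall t, a <= t < c -> s t = Sf t /\ x t = Xf t /\ z t = Zf t) /\
      s c = Sf c /\ x c = Xf c /\
      z c = observer_reset mu g b sin k Sf Zf a c.

Definition GAS_hybrid (mu g : R -> R) (b sin : R) (k : R -> R -> R) (r : R)
    (ss xs : R) : Prop :=
  (forall eps, 0 < eps -> exists del, 0 < del /\
     forall s x z, hybrid_sol mu g b sin k r s x z ->
       dist3 (s 0) (x 0) (z 0) ss xs xs < del ->
       forall t, 0 <= t -> dist3 (s t) (x t) (z t) ss xs xs < eps) /\
  (forall s0 x0 z0, in_dom2 sin s0 x0 -> 0 < z0 ->
     exists s x z, hybrid_sol mu g b sin k r s x z /\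
       s 0 = s0 /\ x 0 = x0 /\ z 0 = z0) /\
  (forall s x z, hybrid_sol mu g b sin k r s x z ->
     conv_to s ss /\ conv_to x xs /\ conv_to z xs).

(* The hybrid observer becomes exact after one period.  On a flow interval
   [tau, tau + r] the biomass and the observer both solve w' = (mu(s) - D - b) w,
   so x = x(tau) E and z = z(tau) E with E = exp (int (mu(s) - D - b)); integrating
   the substrate equation then gives p = x(tau) q, hence int p q / int q^2 = x(tau)
   and the reset value E(tau + r) x(tau) is exactly x(tau + r).  Thus z = x from the
   first reset r on, and from then on (s, x) solves the static closed loop
   D = k(s, x): convergence is inherited from it, and solutions exist by
   concatenating solutions of the forward complete dynamic closed loop.  For
   stability, a Gronwall estimate, using that the vector field is Lipschitz near the
   equilibrium, bounds the distance on [0, r] by exp (3 L r) times its initial value,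
   after which the stability of the static closed loop takes over. *)

From Stdlib Require Import Reals Lra Classical IndefiniteDescription.
From Coquelicot Require Import Coquelicot.
Open Scope R_scope.

Lemma is_derive_value (f : R -> R) (x l l' : R) :
  is_derive f x l -> l = l' -> is_derive f x l'.
Proof. now intros H <-. Qed.

Ltac derive_step :=
  match goal with
  | H : is_derive ?f ?x _ |- is_derive ?f ?x _ => exact H
  | |- is_derive (fun _ => ?c) _ _ => apply (is_derive_const c)
  | |- is_derive (fun y => y) _ _ => apply is_derive_id
  | |- is_derive (fun y => @?f y + @?g y) _ _ => apply (is_derive_plus f g)
  | |- is_derive (fun y => @?f y - @?g y) _ _ => apply (is_derive_minus f g)
  | |- is_derive (fun y => @?f y * @?g y) _ _ =>
      apply (is_derive_mult f g); [ | | exact Rmult_comm]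
  | |- is_derive (fun y => - @?f y) _ _ => apply (is_derive_opp f)
  | |- is_derive (fun y => (@?f y) ^ _) _ _ => apply (is_derive_pow f)
  | |- is_derive (fun y => exp (@?f y)) _ _ =>
      apply (is_derive_comp exp f); [apply is_derive_exp | ]
  end.

Ltac solve_derive :=
  eapply is_derive_value;
  [ repeat derive_step | cbn -[exp Rmult Rplus Ropp Rminus pow RInt]; ring ].

Ltac solve_continuous :=
  repeat match goal with
  | H : continuous ?f ?x |- continuous ?f ?x => exact H
  | H : forall y, continuous ?f y |- continuous ?f _ => apply H
  | |- continuous (fun _ => ?c) _ => apply (continuous_const c)
  | |- continuous (fun y => y) _ => apply continuous_id
  | |- continuous (fun y => @?f y + @?g y) _ => apply (continuous_plus f g)
  | |- continuous (fun y => @?f y - @?g y) _ => apply (continuous_minus f g)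
  | |- continuous (fun y => @?f y * @?g y) _ => apply (continuous_mult f g)
  | |- continuous (fun y => - @?f y) _ => apply (continuous_opp f)
  | |- continuous (fun y => exp (@?f y)) _ => apply (continuous_exp_comp f)
  | |- continuous (fun y => (@?f y) ^ 2) _ =>
      apply (continuous_comp f (fun u => u ^ 2));
      [ | apply (ex_derive_continuous (fun u => u ^ 2)); auto_derive; trivial ]
  end.

(** * Real analysis *)

Lemma continuous_eps (f : R -> R) (t : R) :
  continuous f t <-> forall eps, 0 < eps -> exists d, 0 < d /\
    forall y, Rabs (y - t) < d -> Rabs (f y - f t) < eps.
Proof.
  split.
  - intros H eps Heps.
    destruct (proj1 (filterlim_locally f (f t)) H (mkposreal eps Heps)) as [d Hd].
    exists d. split; [apply cond_pos | intros y Hy; exact (Hd y Hy)].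
  - intros H. apply filterlim_locally. intros eps.
    destruct (H eps (cond_pos eps)) as [d [Hd Hy]].
    exists (mkposreal d Hd). intros y Hb. exact (Hy y Hb).
Qed.

Lemma cont_right_eps (f : R -> R) (t : R) :
  cont_right f t <-> forall eps, 0 < eps -> exists d, 0 < d /\
    forall y, t <= y < t + d -> Rabs (f y - f t) < eps.
Proof.
  split.
  - intros H eps Heps.
    destruct (proj1 (filterlim_locally f (f t)) H (mkposreal eps Heps)) as [d Hd].
    exists d. split; [apply cond_pos |]. intros y [Hy1 Hy2].
    destruct (Rle_lt_or_eq_dec _ _ Hy1) as [Hlt | <-].
    + apply (Hd y); [change (Rabs (y - t) < d); rewrite Rabs_right |]; lra.
    + rewrite Rminus_diag, Rabs_R0. exact Heps.
  - intros H. apply filterlim_locally. intros eps.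
    destruct (H eps (cond_pos eps)) as [d [Hd Hy]].
    exists (mkposreal d Hd). intros y Hb Hty. apply Hy.
    change (Rabs (y - t) < d) in Hb. apply Rabs_def2 in Hb. lra.
Qed.

Lemma cont_left_eps (f : R -> R) (t : R) :
  cont_left f t <-> forall eps, 0 < eps -> exists d, 0 < d /\
    forall y, t - d < y <= t -> Rabs (f y - f t) < eps.
Proof.
  split.
  - intros H eps Heps.
    destruct (proj1 (filterlim_locally f (f t)) H (mkposreal eps Heps)) as [d Hd].
    exists d. split; [apply cond_pos |]. intros y [Hy1 Hy2].
    destruct (Rle_lt_or_eq_dec _ _ Hy2) as [Hlt | ->].
    + apply (Hd y); [change (Rabs (y - t) < d); rewrite Rabs_left |]; lra.
    + rewrite Rminus_diag, Rabs_R0. exact Heps.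
  - intros H. apply filterlim_locally. intros eps.
    destruct (H eps (cond_pos eps)) as [d [Hd Hy]].
    exists (mkposreal d Hd). intros y Hb Hty. apply Hy.
    change (Rabs (y - t) < d) in Hb. apply Rabs_def2 in Hb. lra.
Qed.

Lemma is_derive_continuous (f : R -> R) (t l : R) : is_derive f t l -> continuous f t.
Proof. intros H. apply (ex_derive_continuous (V := R_NormedModule)). now exists l. Qed.

Lemma cont_right_shift (f : R -> R) (a : R) : cont_right f 0 -> cont_right (fun t => f (t - a)) a.
Proof.
  intros H. apply cont_right_eps. intros e He.
  destruct (proj1 (cont_right_eps f 0) H e He) as [d [Hd Hy]].
  exists d. split; [exact Hd |]. intros y Hy'. rewrite Rminus_diag. apply Hy. lra.
Qed.

Lemma cont_left_of_continuous (f : R -> R) (t : R) : continuous f t -> cont_left f t.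
Proof.
  intros H. apply cont_left_eps. intros e He.
  destruct (proj1 (continuous_eps f t) H e He) as [d [Hd Hy]].
  exists d. split; [exact Hd |]. intros y Hy'. apply Hy, Rabs_def1; lra.
Qed.

Lemma cont_right_of_agree (f G : R -> R) (t d : R) : 0 < d ->
  (forall y, t <= y < t + d -> f y = G y) -> continuous G t -> cont_right f t.
Proof.
  intros Hd Heq HG. apply cont_right_eps. intros e He.
  destruct (proj1 (continuous_eps G t) HG e He) as [d' [Hd' Hy]].
  exists (Rmin d d'). split; [apply Rmin_pos; lra |]. intros y Hy'.
  pose proof (Rmin_l d d'). pose proof (Rmin_r d d').
  rewrite !Heq by lra. apply Hy, Rabs_def1; lra.
Qed.

Lemma sqrt_lt_iff (u v : R) : 0 <= u -> 0 < v -> (sqrt u < v <-> u < v ^ 2).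
Proof.
  intros Hu Hv. rewrite <- (sqrt_pow2 v) at 1 by lra. split.
  - intros H. apply sqrt_lt_0_alt in H. exact H.
  - intros H. apply sqrt_lt_1; [lra | apply pow2_ge_0 | exact H].
Qed.

Lemma dist2_lt_iff (a1 a2 b1 b2 e : R) : 0 < e ->
  dist2 a1 a2 b1 b2 < e <-> (a1 - b1) ^ 2 + (a2 - b2) ^ 2 < e ^ 2.
Proof.
  intros He. apply sqrt_lt_iff; [| exact He].
  pose proof (pow2_ge_0 (a1 - b1)). pose proof (pow2_ge_0 (a2 - b2)). lra.
Qed.

Lemma dist3_lt_iff (a1 a2 a3 b1 b2 b3 e : R) : 0 < e ->
  dist3 a1 a2 a3 b1 b2 b3 < e <-> (a1 - b1) ^ 2 + (a2 - b2) ^ 2 + (a3 - b3) ^ 2 < e ^ 2.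
Proof.
  intros He. apply sqrt_lt_iff; [| exact He].
  pose proof (pow2_ge_0 (a1 - b1)). pose proof (pow2_ge_0 (a2 - b2)).
  pose proof (pow2_ge_0 (a3 - b3)). lra.
Qed.

Lemma sqr_mul_exp_opp (m u : R) : (m * exp (- u)) ^ 2 * exp (2 * u) = m ^ 2.
Proof.
  replace (2 * u) with (u + u) by ring. rewrite exp_plus.
  replace ((m * exp (- u)) ^ 2 * (exp u * exp u)) with (m ^ 2 * (exp (- u) * exp u) ^ 2) by ring.
  rewrite <- exp_plus, Rplus_opp_l, exp_0. ring.
Qed.

Lemma Rabs_lt_of_sq (u v : R) : 0 < v -> u ^ 2 < v ^ 2 -> Rabs u < v.
Proof. intros Hv Hu. rewrite <- (pow2_abs u) in Hu. pose proof (Rabs_pos u). nra. Qed.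

Lemma Rabs_mult_le (u v U V : R) : Rabs u <= U -> Rabs v <= V -> Rabs (u * v) <= U * V.
Proof.
  intros Hu Hv. rewrite Rabs_mult.
  apply Rmult_le_compat; [apply Rabs_pos | apply Rabs_pos | exact Hu | exact Hv].
Qed.

Lemma Rabs_sub4 (u1 u2 u3 u4 : R) :
  Rabs (u1 - u2 - u3 - u4) <= Rabs u1 + Rabs u2 + Rabs u3 + Rabs u4.
Proof.
  pose proof (Rabs_triang (u1 - u2 - u3) (- u4)). pose proof (Rabs_triang (u1 - u2) (- u3)).
  pose proof (Rabs_triang u1 (- u2)). rewrite !Rabs_Ropp in *. unfold Rminus in *. lra.
Qed.

Lemma dist2_le_sum (a1 a2 b1 b2 : R) :
  dist2 a1 a2 b1 b2 <= Rabs (a1 - b1) + Rabs (a2 - b2).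
Proof.
  unfold dist2. pose proof (Rabs_pos (a1 - b1)). pose proof (Rabs_pos (a2 - b2)).
  rewrite <- (sqrt_pow2 (Rabs (a1 - b1) + Rabs (a2 - b2))) by lra.
  apply sqrt_le_1_alt. rewrite <- (pow2_abs (a1 - b1)), <- (pow2_abs (a2 - b2)). nra.
Qed.

Lemma continuous_loc_lipschitz2_comp (sin : R) (k : R -> R -> R) (S Z : R -> R) (t : R) :
  loc_lipschitz2 sin k -> (forall y, in_dom2 sin (S y) (Z y)) ->
  continuous S t -> continuous Z t -> continuous (fun y => k (S y) (Z y)) t.
Proof.
  intros Hk Hd HS HZ. apply continuous_eps. intros e He.
  destruct (Hk (S t) (Z t) (Hd t)) as [rho [L [Hr [HL HLip]]]].
  set (eta := Rmin (rho / 2) (e / (2 * (L + 1)))).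
  assert (Heta : 0 < eta) by (apply Rmin_pos; [lra | apply Rdiv_lt_0_compat; lra]).
  assert (E1 : eta <= rho / 2) by apply Rmin_l.
  assert (E2 : eta * (2 * (L + 1)) <= e).
  { apply (Rmult_le_reg_r (/ (2 * (L + 1)))); [apply Rinv_0_lt_compat; lra |].
    rewrite Rmult_assoc, Rinv_r by lra. rewrite Rmult_1_r. apply Rmin_r. }
  destruct (proj1 (continuous_eps S t) HS eta Heta) as [d1 [Hd1 H1]].
  destruct (proj1 (continuous_eps Z t) HZ eta Heta) as [d2 [Hd2 H2]].
  exists (Rmin d1 d2). split; [apply Rmin_pos; lra |]. intros y Hy.
  pose proof (Rmin_l d1 d2). pose proof (Rmin_r d1 d2).
  assert (Hy1 : Rabs (S y - S t) < eta) by (apply H1; lra).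
  assert (Hy2 : Rabs (Z y - Z t) < eta) by (apply H2; lra).
  assert (Hball : dist2 (S y) (Z y) (S t) (Z t) < rho).
  { eapply Rle_lt_trans; [apply dist2_le_sum | lra]. }
  assert (Hcenter : dist2 (S t) (Z t) (S t) (Z t) < rho).
  { eapply Rle_lt_trans; [apply dist2_le_sum |]. rewrite !Rminus_diag, Rabs_R0. lra. }
  eapply Rle_lt_trans; [apply HLip; auto |].
  eapply Rle_lt_trans; [apply Rmult_le_compat_l; [exact HL | apply dist2_le_sum] |].
  nra.
Qed.

Lemma conv_to_unshift (f : R -> R) (r l : R) : conv_to (fun t => f (t + r)) l -> conv_to f l.
Proof.
  intros H. apply (filterlim_ext (fun t => f ((t - r) + r))); [intros t; f_equal; ring |].
  apply (filterlim_comp _ _ _ (fun t => t - r) (fun t => f (t + r)) _ (Rbar_locally p_infty));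
    [| exact H].
  intros P [M HM]. exists (M + r). intros y Hy. apply HM. lra.
Qed.

Lemma conv_to_eventually_eq (f1 f2 : R -> R) (M l : R) :
  (forall t, M < t -> f1 t = f2 t) -> conv_to f1 l -> conv_to f2 l.
Proof. intros H H1. eapply filterlim_ext_loc; [| exact H1]. now exists M. Qed.

Definition period_index (r t : R) : nat :=
  match Rle_dec 0 (t / r) with
  | left H => nfloor (t / r) H
  | right _ => O
  end.

Lemma period_index_spec (r t : R) : 0 < r -> 0 <= t ->
  INR (period_index r t) * r <= t < INR (S (period_index r t)) * r.
Proof.
  intros Hr Ht. unfold period_index.
  destruct (Rle_dec 0 (t / r)) as [H | H]; [| exfalso; apply H, Rdiv_le_0_compat; lra].
  unfold nfloor. destruct (nfloor_ex (t / r) H) as [n Hn]. simpl proj1_sig. rewrite S_INR.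
  assert (Hq : t = t / r * r) by (field; lra). nra.
Qed.

Lemma period_index_unique (r t : R) (i : nat) : 0 < r ->
  INR i * r <= t < INR (S i) * r -> period_index r t = i.
Proof.
  intros Hr Hi. pose proof (pos_INR i).
  destruct (period_index_spec r t Hr ltac:(nra)) as [Hj1 Hj2].
  set (j := period_index r t) in *. rewrite S_INR in *.
  destruct (Nat.lt_trichotomy j i) as [Hlt | [Heq | Hlt]]; [exfalso | exact Heq | exfalso].
  - apply (le_INR (S j) i) in Hlt. rewrite S_INR in Hlt. nra.
  - apply (le_INR (S i) j) in Hlt. rewrite S_INR in Hlt. nra.
Qed.

Definition clamp (a c t : R) : R := Rmax a (Rmin c t).

(** [extend a c f] agrees with [f] on [a, c] and is constant outside; a function
    that is only one-sided continuous at [a] and [c] thus becomes continuous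
    everywhere, which the integration and mean value lemmas require. *)
Definition extend (a c : R) (f : R -> R) (t : R) : R := f (clamp a c t).

Lemma clamp_id (a c t : R) : a <= t <= c -> clamp a c t = t.
Proof. intros. unfold clamp. rewrite Rmin_right, Rmax_right; lra. Qed.

Lemma clamp_below (a c t : R) : a <= c -> t <= a -> clamp a c t = a.
Proof. intros. unfold clamp. rewrite Rmin_right, Rmax_left; lra. Qed.

Lemma clamp_above (a c t : R) : a <= c -> c <= t -> clamp a c t = c.
Proof. intros. unfold clamp. rewrite Rmin_left, Rmax_right; lra. Qed.

Lemma clamp_in (a c t : R) : a <= c -> a <= clamp a c t <= c.
Proof.
  intros. destruct (Rle_or_lt t a); [rewrite clamp_below; lra |].
  destruct (Rle_or_lt c t); [rewrite clamp_above; lra | rewrite clamp_id; lra].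
Qed.

Lemma extend_id (f : R -> R) (a c t : R) : a <= t <= c -> extend a c f t = f t.
Proof. intros Ht. unfold extend. now rewrite clamp_id. Qed.

Lemma locally_in_interval (a c t : R) : a < t < c -> locally t (fun y => a < y < c).
Proof.
  intros Ht. assert (Hp : 0 < Rmin (t - a) (c - t)) by (apply Rmin_pos; lra).
  exists (mkposreal _ Hp). intros y Hy. change (Rabs (y - t) < Rmin (t - a) (c - t)) in Hy.
  pose proof (Rmin_l (t - a) (c - t)). pose proof (Rmin_r (t - a) (c - t)).
  apply Rabs_def2 in Hy. lra.
Qed.

Lemma extend_locally_eq (f : R -> R) (a c t : R) :
  a < t < c -> locally t (fun y => f y = extend a c f y).
Proof.
  intros Ht. eapply filter_imp; [| apply locally_in_interval, Ht].
  intros y Hy. symmetry. apply extend_id. lra.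
Qed.

Lemma continuous_extend (f : R -> R) (a c : R) : a < c ->
  cont_right f a -> cont_left f c -> (forall t, a < t < c -> continuous f t) ->
  forall t, continuous (extend a c f) t.
Proof.
  intros Hac HR HL HI t. apply continuous_eps. intros e He. unfold extend.
  assert (Hconst : forall y u, (y <= a /\ u <= a) \/ (c <= y /\ c <= u) ->
            Rabs (f (clamp a c y) - f (clamp a c u)) < e).
  { intros y u [[Hy Hu] | [Hy Hu]];
      [rewrite !(clamp_below a c) by lra | rewrite !(clamp_above a c) by lra];
      rewrite Rminus_diag, Rabs_R0; exact He. }
  destruct (Rlt_or_le t a) as [Hta | Hat]; [| destruct (Rlt_or_le c t) as [Hct | Htc]].
  - exists (a - t). split; [lra |]. intros y Hy. apply Rabs_def2 in Hy. apply Hconst. lra.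
  - exists (t - c). split; [lra |]. intros y Hy. apply Rabs_def2 in Hy. apply Hconst. lra.
  - destruct (Rle_lt_or_eq_dec _ _ Hat) as [Hat' | <-];
      [destruct (Rle_lt_or_eq_dec _ _ Htc) as [Htc' | ->] |].
    + destruct (proj1 (continuous_eps f t) (HI t (conj Hat' Htc')) e He) as [d [Hd Hy]].
      exists (Rmin d (Rmin (t - a) (c - t))). split; [repeat apply Rmin_pos; lra |].
      intros y Hy'. pose proof (Rmin_l d (Rmin (t - a) (c - t))).
      pose proof (Rmin_r d (Rmin (t - a) (c - t))).
      pose proof (Rmin_l (t - a) (c - t)). pose proof (Rmin_r (t - a) (c - t)).
      pose proof Hy' as Hy''. apply Rabs_def2 in Hy''.
      rewrite !clamp_id by lra. apply Hy. lra.
    + destruct (proj1 (cont_left_eps f c) HL e He) as [d [Hd Hy]].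
      exists (Rmin d (c - a)). split; [apply Rmin_pos; lra |]. intros y Hy'.
      apply Rabs_def2 in Hy'. pose proof (Rmin_l d (c - a)). pose proof (Rmin_r d (c - a)).
      destruct (Rle_or_lt c y); [apply Hconst; lra |].
      rewrite clamp_id, (clamp_above a c c) by lra. apply Hy. lra.
    + destruct (proj1 (cont_right_eps f a) HR e He) as [d [Hd Hy]].
      exists (Rmin d (c - a)). split; [apply Rmin_pos; lra |]. intros y Hy'.
      apply Rabs_def2 in Hy'. pose proof (Rmin_l d (c - a)). pose proof (Rmin_r d (c - a)).
      destruct (Rle_or_lt y a); [apply Hconst; lra |].
      rewrite clamp_id, (clamp_below a c a) by lra. apply Hy. lra.
Qed.

Lemma nonincreasing_of_derive_nonpos (f df : R -> R) (a b : R) : a <= b ->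
  (forall y, continuous f y) -> (forall y, a < y < b -> is_derive f y (df y)) ->
  (forall y, a < y < b -> df y <= 0) -> f b <= f a.
Proof.
  intros Hab Hc Hd Hn. destruct (Rle_lt_or_eq_dec _ _ Hab) as [Hlt | ->]; [| lra].
  set (pr := fun y (Hy : a < y < b) =>
    exist (derivable_pt_abs f y) (df y) (proj1 (is_derive_Reals f y (df y)) (Hd y Hy))).
  destruct (MVT f id a b pr (fun y _ => derivable_pt_id y) Hlt) as [y [Hy Heq]].
  - intros y _. apply continuity_pt_filterlim, Hc.
  - intros y _. apply derivable_continuous_pt, derivable_pt_id.
  - rewrite derive_pt_id in Heq. specialize (Hn y Hy). simpl in Heq. unfold id in Heq. nra.
Qed.

Lemma constant_of_derive_zero (f : R -> R) (a b : R) : a <= b ->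
  (forall y, continuous f y) -> (forall y, a < y < b -> is_derive f y 0) -> f b = f a.
Proof.
  intros Hab Hc Hd. apply Rle_antisym.
  - apply (nonincreasing_of_derive_nonpos f (fun _ => 0)); [exact Hab | exact Hc | exact Hd |].
    intros; lra.
  - cut (- f b <= - f a); [lra |].
    apply (nonincreasing_of_derive_nonpos (fun y => - f y) (fun _ => 0)); [exact Hab | | |].
    + intros y. solve_continuous.
    + intros y Hy. pose proof (Hd y Hy). solve_derive.
    + intros; lra.
Qed.

Lemma is_derive_shift (f : R -> R) (c t l : R) :
  is_derive f (t + c) l -> is_derive (fun u => f (u + c)) t l.
Proof.
  intros H. eapply is_derive_value; [apply (is_derive_comp f (fun u => u + c)); [exact H |] |].
  - apply (is_derive_plus (fun u => u) (fun _ => c)); [apply is_derive_id | apply is_derive_const].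
  - cbn. ring.
Qed.

Lemma is_derive_glue (f g1 g2 d1 d2 : R -> R) (t0 del l : R) : 0 < del ->
  (forall y, t0 - del < y <= t0 -> f y = g1 y) ->
  (forall y, t0 <= y < t0 + del -> f y = g2 y) ->
  (forall y, continuous g1 y) -> (forall y, continuous g2 y) ->
  (forall y, t0 - del < y < t0 -> is_derive g1 y (d1 y)) ->
  (forall y, t0 < y < t0 + del -> is_derive g2 y (d2 y)) ->
  continuous d1 t0 -> continuous d2 t0 -> d1 t0 = l -> d2 t0 = l ->
  is_derive f t0 l.
Proof.
  intros Hdel Hf1 Hf2 Hg1 Hg2 Hd1 Hd2 Hc1 Hc2 E1 E2.
  apply is_derive_Reals. intros eps Heps.
  destruct (proj1 (continuous_eps d1 t0) Hc1 eps Heps) as [e1 [He1 H1]].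
  destruct (proj1 (continuous_eps d2 t0) Hc2 eps Heps) as [e2 [He2 H2]].
  assert (Hm : 0 < Rmin del (Rmin e1 e2)) by (repeat apply Rmin_pos; lra).
  exists (mkposreal _ Hm). intros h Hh0 Hh. simpl in Hh.
  pose proof (Rmin_l del (Rmin e1 e2)). pose proof (Rmin_r del (Rmin e1 e2)).
  pose proof (Rmin_l e1 e2). pose proof (Rmin_r e1 e2).
  apply Rabs_def2 in Hh.
  (* on each side, the difference quotient is a derivative value at a nearby point *)
  destruct (Rlt_or_le h 0) as [Hn | Hp].
  - destruct (MVT_gen g1 (t0 + h) t0 d1) as [xi [Hxi Heq]];
      rewrite Rmin_left, Rmax_right in * by lra.
    + intros y Hy. apply Hd1. lra.
    + intros y _. apply continuity_pt_filterlim, Hg1.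
    + rewrite (Hf1 (t0 + h)), (Hf1 t0) by lra.
      replace ((g1 (t0 + h) - g1 t0) / h) with (d1 xi) by (field_simplify_eq; lra).
      rewrite <- E1. apply H1, Rabs_def1; lra.
  - destruct (MVT_gen g2 t0 (t0 + h) d2) as [xi [Hxi Heq]];
      rewrite Rmin_left, Rmax_right in * by lra.
    + intros y Hy. apply Hd2. lra.
    + intros y _. apply continuity_pt_filterlim, Hg2.
    + rewrite (Hf2 (t0 + h)), (Hf2 t0) by lra.
      replace ((g2 (t0 + h) - g2 t0) / h) with (d2 xi) by (field_simplify_eq; lra).
      rewrite <- E2. apply H2, Rabs_def1; lra.
Qed.

Lemma calm_of_derive (f : R -> R) (s0 l : R) : is_derive f s0 l ->
  exists d C, 0 < d /\ 0 <= C /\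
    forall s, Rabs (s - s0) < d -> Rabs (f s - f s0) <= C * Rabs (s - s0).
Proof.
  intros H. apply is_derive_Reals in H. destruct (H 1 Rlt_0_1) as [d Hd].
  exists d, (Rabs l + 1). split; [apply cond_pos |]. split; [pose proof (Rabs_pos l); lra |].
  intros s Hs. destruct (Req_dec s s0) as [-> | Hne].
  - rewrite !Rminus_diag, Rabs_R0. lra.
  - specialize (Hd (s - s0)). replace (s0 + (s - s0)) with s in Hd by ring.
    specialize (Hd ltac:(lra) Hs).
    replace (f s - f s0) with (((f s - f s0) / (s - s0) - l) * (s - s0) + l * (s - s0))
      by (field; lra).
    eapply Rle_trans; [apply Rabs_triang |]. rewrite !Rabs_mult.
    pose proof (Rabs_pos l). pose proof (Rabs_pos (s - s0)). nra.
Qed.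

Lemma is_derive_RInt_continuous (h : R -> R) (a t : R) :
  (forall y, continuous h y) -> is_derive (fun u => RInt h a u) t (h t).
Proof.
  intros H. apply (is_derive_RInt h (RInt h a) a t); [| apply H].
  exists (mkposreal 1 Rlt_0_1). intros y _. apply (RInt_correct (V := R_CompleteNormedModule)).
  apply ex_RInt_continuous. intros; apply H.
Qed.

Lemma continuous_RInt (h : R -> R) (a t : R) :
  (forall y, continuous h y) -> continuous (fun u => RInt h a u) t.
Proof. intros H. eapply is_derive_continuous. apply is_derive_RInt_continuous, H. Qed.

Lemma RInt_ext_interval (f1 f2 : R -> R) (a c : R) : a <= c ->
  (forall w, a <= w <= c -> f1 w = f2 w) -> RInt f1 a c = RInt f2 a c.
Proof.
  intros Hac H. apply RInt_ext. intros x Hx. rewrite Rmin_left, Rmax_right in Hx by lra.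
  apply H; lra.
Qed.

Lemma linear_ode_explicit (m W : R -> R) (a c : R) :
  (forall y, continuous m y) -> (forall y, continuous W y) ->
  (forall t, a < t < c -> is_derive W t (m t * W t)) ->
  forall t, a <= t <= c -> W t = W a * exp (RInt m a t).
Proof.
  intros Hm HW HWd t Ht.
  assert (Hconst : W t * exp (- RInt m a t) = W a * exp (- RInt m a a)).
  { apply (constant_of_derive_zero (fun y => W y * exp (- RInt m a y))); [lra | |].
    - intros y. pose proof (continuous_RInt m a y Hm). solve_continuous.
    - intros y Hy. pose proof (HWd y ltac:(lra)). pose proof (is_derive_RInt_continuous m a y Hm).
      solve_derive. }
  rewrite RInt_point in Hconst. change (zero : R) with 0 in Hconst.
  rewrite Ropp_0, exp_0, Rmult_1_r in Hconst.
  rewrite <- Hconst, Rmult_assoc, <- exp_plus, Rplus_opp_l, exp_0. ring.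
Qed.

Lemma continuous_barrier (V : R -> R) (B r : R) : (forall y, continuous V y) ->
  (forall t, 0 <= t <= r -> (forall y, 0 <= y < t -> V y < B) -> V t < B) ->
  forall t, 0 <= t <= r -> V t < B.
Proof.
  intros Hc Hstep t Ht.
  set (good := fun u => 0 <= u <= r /\ forall y, 0 <= y <= u -> V y < B).
  assert (Hgood0 : good 0).
  { split; [lra |]. intros y Hy. replace y with 0 by lra. apply Hstep; [lra |]. intros; lra. }
  destruct (completeness good) as [T [HT1 HT2]].
  { exists r. intros u [Hu _]. lra. }
  { now exists 0. }
  assert (T0 : 0 <= T) by (apply HT1, Hgood0).
  assert (Tr : T <= r) by (apply HT2; intros u [Hu _]; lra).
  assert (Hbelow : forall y, 0 <= y < T -> V y < B).
  { intros y Hy. destruct (classic (exists u, good u /\ y < u)) as [[u [[_ Hu] Hyu]] | Hn].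
    - apply Hu. lra.
    - exfalso. assert (T <= y); [| lra].
      apply HT2. intros u Hu. destruct (Rle_or_lt u y); auto. exfalso. eauto. }
  assert (HT : V T < B) by (apply Hstep; [lra | exact Hbelow]).
  assert (Teq : T = r).
  { destruct (Rle_lt_or_eq_dec _ _ Tr) as [Tlt | Te]; auto. exfalso.
    destruct (proj1 (continuous_eps V T) (Hc T) (B - V T)) as [d [Hd Hnear]]; [lra |].
    pose proof (Rmin_l (T + d / 2) r). pose proof (Rmin_r (T + d / 2) r).
    set (u := Rmin (T + d / 2) r) in *.
    assert (T < u) by (apply Rmin_glb_lt; lra).
    assert (good u); [| assert (u <= T) by (apply HT1; auto); lra].
    split; [split; lra |]. intros y Hy. destruct (Rlt_or_le y T); [apply Hbelow; lra |].
    assert (Rabs (y - T) < d) as Hyd by (apply Rabs_def1; lra).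
    specialize (Hnear y Hyd). apply Rabs_def2 in Hnear. lra. }
  destruct (Rlt_or_le t T); [apply Hbelow; lra | replace t with T by lra; exact HT].
Qed.

Lemma gronwall_below (V dV : R -> R) (c B r : R) : 0 <= c -> 0 <= V 0 ->
  (forall y, continuous V y) -> (forall t, 0 < t < r -> is_derive V t (dV t)) ->
  (forall t, V t < B -> dV t <= c * V t) -> V 0 * exp (c * r) < B ->
  forall t, 0 <= t <= r -> V t <= V 0 * exp (c * t).
Proof.
  intros Hc HV0 Hcont Hder Hgrow Hr.
  assert (Hdecay : forall t, 0 <= t <= r -> (forall y, 0 <= y < t -> V y < B) ->
            V t <= V 0 * exp (c * t)).
  { intros t Ht Hbelow.
    assert (HW : V t * exp (- (c * t)) <= V 0 * exp (- (c * 0))).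
    { apply (nonincreasing_of_derive_nonpos (fun y => V y * exp (- (c * y)))
        (fun y => (dV y - c * V y) * exp (- (c * y)))); [lra | | |].
      - intros y. solve_continuous.
      - intros y Hy. pose proof (Hder y ltac:(lra)). solve_derive.
      - intros y Hy. pose proof (Hgrow y (Hbelow y ltac:(lra))).
        pose proof (exp_pos (- (c * y))). nra. }
    rewrite Rmult_0_r, Ropp_0, exp_0, Rmult_1_r in HW.
    apply (Rmult_le_reg_r (exp (- (c * t)))); [apply exp_pos |].
    rewrite Rmult_assoc, <- exp_plus, Rplus_opp_r, exp_0, Rmult_1_r. exact HW. }
  assert (Hmono : forall t, 0 <= t <= r -> V 0 * exp (c * t) <= V 0 * exp (c * r)).
  { intros t Ht. apply Rmult_le_compat_l; [exact HV0 |].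
    destruct (Rle_lt_or_eq_dec (c * t) (c * r)) as [Hlt | ->]; [nra | | lra].
    left. apply exp_increasing, Hlt. }
  intros t Ht. apply Hdecay; [exact Ht |]. intros y Hy.
  apply (continuous_barrier V B r Hcont); [| lra].
  intros u Hu Hbelow. pose proof (Hdecay u Hu Hbelow). pose proof (Hmono u Hu). lra.
Qed.

Lemma inner_le_of_linear_bound (u1 u2 u3 F1 F2 F3 L : R) : 0 <= L ->
  Rabs F1 <= L * (Rabs u1 + Rabs u2 + Rabs u3) ->
  Rabs F2 <= L * (Rabs u1 + Rabs u2 + Rabs u3) ->
  Rabs F3 <= L * (Rabs u1 + Rabs u2 + Rabs u3) ->
  u1 * F1 + u2 * F2 + u3 * F3 <= 3 * L * (u1 ^ 2 + u2 ^ 2 + u3 ^ 2).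
Proof.
  intros HL H1 H2 H3. set (D := Rabs u1 + Rabs u2 + Rabs u3) in *.
  assert (Hterm : forall u F, Rabs F <= L * D -> u * F <= Rabs u * (L * D)).
  { intros u F HF. eapply Rle_trans; [apply Rle_abs |]. rewrite Rabs_mult.
    apply Rmult_le_compat_l; [apply Rabs_pos | exact HF]. }
  pose proof (Hterm u1 F1 H1). pose proof (Hterm u2 F2 H2). pose proof (Hterm u3 F3 H3).
  assert (Hsq : D ^ 2 <= 3 * (u1 ^ 2 + u2 ^ 2 + u3 ^ 2)).
  { unfold D. rewrite <- (pow2_abs u1), <- (pow2_abs u2), <- (pow2_abs u3).
    pose proof (pow2_ge_0 (Rabs u1 - Rabs u2)). pose proof (pow2_ge_0 (Rabs u2 - Rabs u3)).
    pose proof (pow2_ge_0 (Rabs u1 - Rabs u3)). nra. }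
  assert (L * D ^ 2 <= L * (3 * (u1 ^ 2 + u2 ^ 2 + u3 ^ 2))) by (apply Rmult_le_compat_l; lra).
  unfold D in *. nra.
Qed.

(** * Exactness of the observer *)

Definition flow_piece (mu g : R -> R) (b sin : R) (k : R -> R -> R)
    (Sf Xf Zf : R -> R) (a c : R) : Prop :=
  a < c /\
  (forall t, a <= t <= c -> in_dom2 sin (Sf t) (Xf t) /\ 0 < Zf t) /\
  (forall t, a < t < c ->
     is_derive Sf t (k (Sf t) (Zf t) * (sin - Sf t) - g (Sf t) * Xf t) /\
     is_derive Xf t ((mu (Sf t) - k (Sf t) (Zf t) - b) * Xf t) /\
     is_derive Zf t ((mu (Sf t) - k (Sf t) (Zf t) - b) * Zf t)) /\
  cont_right Sf a /\ cont_right Xf a /\ cont_right Zf a /\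
  cont_left Sf c /\ cont_left Xf c /\ cont_left Zf c.

Lemma flow_piece_extend (mu g : R -> R) (b sin : R) (k : R -> R -> R)
    (Sf Xf Zf : R -> R) (a c : R) :
  flow_piece mu g b sin k Sf Xf Zf a c ->
  let S := extend a c Sf in let X := extend a c Xf in let Z := extend a c Zf in
  (forall y, continuous S y /\ continuous X y /\ continuous Z y) /\
  (forall y, in_dom2 sin (S y) (X y) /\ 0 < Z y) /\
  (forall t, a < t < c ->
     is_derive S t (k (S t) (Z t) * (sin - S t) - g (S t) * X t) /\
     is_derive X t ((mu (S t) - k (S t) (Z t) - b) * X t) /\
     is_derive Z t ((mu (S t) - k (S t) (Z t) - b) * Z t)).
Proof.
  intros [Hac [Hd [Hder [HS0 [HX0 [HZ0 [HS1 [HX1 HZ1]]]]]]]] S X Z.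
  split; [| split].
  - intros y. split; [| split]; apply continuous_extend; try assumption;
      intros t Ht; destruct (Hder t Ht) as [D1 [D2 D3]]; eapply is_derive_continuous;
      eassumption.
  - intros y. apply Hd, clamp_in. lra.
  - intros t Ht. destruct (Hder t Ht) as [D1 [D2 D3]].
    unfold S, X, Z. rewrite !extend_id by lra.
    split; [| split]; (eapply is_derive_ext_loc; [apply extend_locally_eq; exact Ht |]); assumption.
Qed.

Lemma observer_reset_ext (mu g : R -> R) (b sin : R) (k : R -> R -> R)
    (S1 Z1 S2 Z2 : R -> R) (a c : R) : a <= c ->
  (forall w, a <= w <= c -> S1 w = S2 w /\ Z1 w = Z2 w) ->
  observer_reset mu g b sin k S1 Z1 a c = observer_reset mu g b sin k S2 Z2 a c.
Proof.
  intros Hac H. unfold observer_reset. cbv zeta.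
  assert (HE : forall t, a <= t <= c ->
    exp (RInt (fun w => mu (S1 w) - k (S1 w) (Z1 w) - b) a t) =
    exp (RInt (fun w => mu (S2 w) - k (S2 w) (Z2 w) - b) a t)).
  { intros t Ht. apply f_equal, RInt_ext_interval; [lra |].
    intros w Hw. destruct (H w) as [-> ->]; [lra | reflexivity]. }
  assert (HQ : forall t, a <= t <= c ->
    RInt (fun rho => g (S1 rho) * exp (RInt (fun w => mu (S1 w) - k (S1 w) (Z1 w) - b) a rho)) a t =
    RInt (fun rho => g (S2 rho) * exp (RInt (fun w => mu (S2 w) - k (S2 w) (Z2 w) - b) a rho)) a t).
  { intros t Ht. apply RInt_ext_interval; [lra |].
    intros w Hw. rewrite HE by lra. destruct (H w) as [-> _]; [lra | reflexivity]. }
  assert (HP : forall t, a <= t <= c ->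
    S1 t - S1 a - RInt (fun w => k (S1 w) (Z1 w) * (sin - S1 w)) a t =
    S2 t - S2 a - RInt (fun w => k (S2 w) (Z2 w) * (sin - S2 w)) a t).
  { intros t Ht. destruct (H t) as [-> _]; [lra |]. destruct (H a) as [-> _]; [lra |].
    apply f_equal, RInt_ext_interval; [lra |].
    intros w Hw. destruct (H w) as [-> ->]; [lra | reflexivity]. }
  rewrite HE by lra.
  apply (f_equal2 Rdiv); [apply (f_equal2 Rmult); [reflexivity |] |];
    apply RInt_ext_interval; [exact Hac | | exact Hac |];
    intros t Ht; rewrite HQ by lra; [rewrite HP by lra |]; reflexivity.
Qed.

Section ObserverExactness.

Variables (mu g : R -> R) (b sin : R) (k : R -> R -> R).
Hypothesis Hmu : forall s, 0 < s -> continuous mu s.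
Hypothesis Hg : forall s, 0 < s -> continuous g s.
Hypothesis Hgpos : forall s, 0 < s -> 0 < g s.
Hypothesis Hk : loc_lipschitz2 sin k.
Variables (S X Z : R -> R) (a c : R).
Hypothesis Hac : a < c.
Hypothesis Hcont : forall y, continuous S y /\ continuous X y /\ continuous Z y.
Hypothesis Hdom : forall y, in_dom2 sin (S y) (X y) /\ 0 < Z y.
Hypothesis Hflow : forall t, a < t < c ->
  is_derive S t (k (S t) (Z t) * (sin - S t) - g (S t) * X t) /\
  is_derive X t ((mu (S t) - k (S t) (Z t) - b) * X t) /\
  is_derive Z t ((mu (S t) - k (S t) (Z t) - b) * Z t).

Let growth (w : R) : R := mu (S w) - k (S w) (Z w) - b.
Let gain (t : R) : R := exp (RInt growth a t).

Lemma continuous_dilution (y : R) : continuous (fun w => k (S w) (Z w)) y.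
Proof.
  apply continuous_loc_lipschitz2_comp with sin; [exact Hk | | apply Hcont | apply Hcont].
  intros w. destruct (Hdom w) as [[Hs _] Hz]. split; assumption.
Qed.

Lemma continuous_growth (y : R) : continuous growth y.
Proof.
  unfold growth. destruct (Hdom y) as [[[Hs _] _] _].
  pose proof (continuous_dilution y).
  pose proof (continuous_comp S mu y (proj1 (Hcont y)) (Hmu _ Hs)).
  solve_continuous.
Qed.

Lemma continuous_gain (y : R) : continuous gain y.
Proof.
  pose proof (continuous_RInt growth a y continuous_growth). unfold gain. solve_continuous.
Qed.

Lemma biomass_explicit (t : R) : a <= t <= c -> X t = X a * gain t.
Proof.
  apply linear_ode_explicit; [apply continuous_growth | apply Hcont | intros u Hu; apply Hflow, Hu].
Qed.

Lemma observer_explicit (t : R) : a <= t <= c -> Z t = Z a * gain t.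
Proof.
  apply linear_ode_explicit; [apply continuous_growth | apply Hcont | intros u Hu; apply Hflow, Hu].
Qed.

Lemma observer_biomass_ratio (t : R) : a <= t <= c -> X t * Z a = Z t * X a.
Proof. intros Ht. rewrite (biomass_explicit t Ht), (observer_explicit t Ht). ring. Qed.

(* [defect] and [regressor] are the signals p and q of the observer. *)
Let inflow (w : R) : R := k (S w) (Z w) * (sin - S w).
Let defect (t : R) : R := S t - S a - RInt inflow a t.
Let uptake (w : R) : R := g (S w) * gain w.
Let regressor (t : R) : R := - RInt uptake a t.

Lemma continuous_inflow (y : R) : continuous inflow y.
Proof.
  pose proof (continuous_dilution y). pose proof (proj1 (Hcont y)). unfold inflow.
  solve_continuous.
Qed.

Lemma continuous_uptake (y : R) : continuous uptake y.
Proof.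
  destruct (Hdom y) as [[[Hs _] _] _].
  pose proof (continuous_comp S g y (proj1 (Hcont y)) (Hg _ Hs)).
  pose proof (continuous_gain y). unfold uptake. solve_continuous.
Qed.

Lemma continuous_regressor (y : R) : continuous regressor y.
Proof.
  pose proof (continuous_RInt _ a y continuous_uptake). unfold regressor. solve_continuous.
Qed.

(* defect' = -g(S) X = X(a) regressor', since X = X(a) gain *)
Lemma defect_proportional (t : R) : a <= t <= c -> defect t = X a * regressor t.
Proof.
  intros Ht.
  assert (Hconst : defect t - X a * regressor t = defect a - X a * regressor a).
  { apply (constant_of_derive_zero (fun y => defect y - X a * regressor y)); [lra | |].
    - intros y. pose proof (continuous_RInt _ a y continuous_inflow).
      pose proof (proj1 (Hcont y)). pose proof (continuous_regressor y).
      unfold defect. solve_continuous.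
    - intros y Hy. destruct (Hflow y ltac:(lra)) as [DS _].
      pose proof (is_derive_RInt_continuous _ a y continuous_inflow).
      pose proof (is_derive_RInt_continuous _ a y continuous_uptake).
      apply (is_derive_value _ _ (g (S y) * (X a * gain y - X y)));
        [unfold defect, regressor, inflow, uptake in *; solve_derive |].
      rewrite (biomass_explicit y) by lra. ring. }
  assert (Ha : defect a = 0 /\ regressor a = 0).
  { unfold defect, regressor. rewrite !RInt_point. change (zero : R) with 0. split; ring. }
  destruct Ha as [Hda Hra]. rewrite Hda, Hra in Hconst. lra.
Qed.

Lemma regressor_neg (t : R) : a < t <= c -> regressor t < 0.
Proof.
  intros Ht. unfold regressor. apply Ropp_lt_gt_0_contravar, RInt_gt_0; [lra | |].
  - intros y Hy. apply Rmult_lt_0_compat; [apply Hgpos, Hdom | apply exp_pos].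
  - intros y _. apply continuous_uptake.
Qed.

Lemma observer_reset_exact : observer_reset mu g b sin k S Z a c = X c.
Proof.
  change (gain c * RInt (fun t => defect t * regressor t) a c / RInt (fun t => regressor t ^ 2) a c
    = X c).
  assert (Hsq : forall y, continuous (fun t => regressor t ^ 2) y).
  { intros y. pose proof (continuous_regressor y). solve_continuous. }
  assert (Hpos : 0 < RInt (fun t => regressor t ^ 2) a c).
  { apply RInt_gt_0; [lra | | intros y _; apply Hsq].
    intros y Hy. pose proof (regressor_neg y ltac:(lra)). nra. }
  rewrite (RInt_ext_interval _ (fun t => X a * regressor t ^ 2)) by
    (try lra; intros t Ht; rewrite defect_proportional by lra; ring).
  rewrite (RInt_scal (V := R_CompleteNormedModule) (fun t => regressor t ^ 2))
    by (apply ex_RInt_continuous; intros y _; apply Hsq).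
  change (scal (X a) ?u) with (X a * u).
  rewrite (biomass_explicit c) by lra. field. lra.
Qed.

End ObserverExactness.

Lemma flow_piece_reset (mu g : R -> R) (b sin : R) (k : R -> R -> R)
    (Sf Xf Zf : R -> R) (a c : R) :
  (forall s, 0 < s -> continuous mu s) -> (forall s, 0 < s -> continuous g s) ->
  (forall s, 0 < s -> 0 < g s) -> loc_lipschitz2 sin k ->
  flow_piece mu g b sin k Sf Xf Zf a c ->
  observer_reset mu g b sin k Sf Zf a c = Xf c /\
  (forall t, a <= t <= c -> Xf t * Zf a = Zf t * Xf a).
Proof.
  intros Hmu Hg Hgpos Hk Hp. pose proof (proj1 Hp) as Hac.
  destruct (flow_piece_extend _ _ _ _ _ _ _ _ _ _ Hp) as [Hc [Hd Hder]].
  assert (Hid : forall t, a <= t <= c ->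
            extend a c Sf t = Sf t /\ extend a c Xf t = Xf t /\ extend a c Zf t = Zf t).
  { intros t Ht. rewrite !extend_id by exact Ht. auto. }
  destruct (Hid a) as [_ [Ea Za]]; [lra |]. destruct (Hid c) as [_ [Ec _]]; [lra |].
  split.
  - rewrite (observer_reset_ext mu g b sin k Sf Zf (extend a c Sf) (extend a c Zf)); [| lra |].
    + rewrite <- Ec. apply (observer_reset_exact mu g b sin k Hmu Hg Hgpos Hk
        (extend a c Sf) (extend a c Xf) (extend a c Zf) a c Hac Hc Hd Hder).
    + intros w Hw. destruct (Hid w Hw) as [-> [_ ->]]. auto.
  - intros t Ht. destruct (Hid t Ht) as [_ [Et Zt]]. rewrite <- Et, <- Zt, <- Ea, <- Za.
    exact (observer_biomass_ratio mu g b sin k Hmu Hk _ _ _ a c Hc Hd Hder t Ht).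
Qed.

(** * The closed-loop vector field *)

Lemma admissible_rate_continuous (f : R -> R) : admissible_rate f ->
  forall s, 0 < s -> continuous f s.
Proof. intros [[df [Hd _]] _] s Hs. eapply is_derive_continuous, Hd, Hs. Qed.

Lemma continuous_static_field (mu g : R -> R) (b sin : R) (k : R -> R -> R) (S X : R -> R) (y : R) :
  (forall s, 0 < s -> continuous mu s) -> (forall s, 0 < s -> continuous g s) ->
  loc_lipschitz2 sin k -> (forall w, in_dom2 sin (S w) (X w)) ->
  continuous S y -> continuous X y ->
  continuous (fun w => k (S w) (X w) * (sin - S w) - g (S w) * X w) y /\
  continuous (fun w => (mu (S w) - k (S w) (X w) - b) * X w) y.
Proof.
  intros Hmu Hg Hk Hd HS HX. destruct (Hd y) as [[Hs _] _].
  pose proof (continuous_loc_lipschitz2_comp sin k S X y Hk Hd HS HX).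
  pose proof (continuous_comp S mu y HS (Hmu _ Hs)).
  pose proof (continuous_comp S g y HS (Hg _ Hs)).
  split; solve_continuous.
Qed.

Lemma closed_loop_rates_calm (mu g : R -> R) (sin : R) (k : R -> R -> R) (ss xs lm lg : R) :
  is_derive mu ss lm -> is_derive g ss lg -> loc_lipschitz2 sin k -> in_dom2 sin ss xs ->
  exists rho Cm Cg Lk, 0 < rho /\ rho <= 1 /\ 0 <= Cm /\ 0 <= Cg /\ 0 <= Lk /\
    forall s z, in_dom2 sin s z -> Rabs (s - ss) < rho -> Rabs (z - xs) < rho ->
      Rabs (mu s - mu ss) <= Cm * Rabs (s - ss) /\
      Rabs (g s - g ss) <= Cg * Rabs (s - ss) /\
      Rabs (k s z - k ss xs) <= Lk * (Rabs (s - ss) + Rabs (z - xs)).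
Proof.
  intros Hm Hg Hk Heq.
  destruct (calm_of_derive mu ss lm Hm) as [dm [Cm [Hdm [HCm Hmb]]]].
  destruct (calm_of_derive g ss lg Hg) as [dg [Cg [Hdg [HCg Hgb]]]].
  destruct (Hk ss xs Heq) as [rk [Lk [Hrk [HLk HLip]]]].
  set (rho := Rmin dm (Rmin dg (Rmin (rk / 2) 1))).
  assert (Hrho : rho <= dm /\ rho <= dg /\ rho <= rk / 2 /\ rho <= 1).
  { unfold rho. repeat split;
      repeat (apply Rmin_l || apply Rle_refl || (eapply Rle_trans; [apply Rmin_r |])). }
  exists rho, Cm, Cg, Lk. split; [unfold rho; repeat apply Rmin_pos; lra |].
  do 4 (split; [lra |]). intros s z Hsz Hs Hz. split; [apply Hmb; lra | split; [apply Hgb; lra |]].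
  eapply Rle_trans.
  - apply HLip; [exact Hsz | exact Heq | |];
      eapply Rle_lt_trans; try apply dist2_le_sum; rewrite ?Rminus_diag, ?Rabs_R0; lra.
  - apply Rmult_le_compat_l; [exact HLk | apply dist2_le_sum].
Qed.

Lemma closed_loop_field_linear_bound (mu g : R -> R) (b sin : R) (k : R -> R -> R)
    (ss xs Ds lm lg : R) :
  is_derive mu ss lm -> is_derive g ss lg -> loc_lipschitz2 sin k ->
  0 < ss < sin -> 0 < xs -> 0 < Ds -> 0 <= g ss ->
  mu ss = Ds + b -> Ds * (sin - ss) = g ss * xs -> Ds = k ss xs ->
  exists rho L, 0 < rho /\ 0 < L /\ forall s x z, in_dom2 sin s x -> 0 < z ->
    Rabs (s - ss) < rho -> Rabs (x - xs) < rho -> Rabs (z - xs) < rho ->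
    let D := Rabs (s - ss) + Rabs (x - xs) + Rabs (z - xs) in
    Rabs (k s z * (sin - s) - g s * x) <= L * D /\
    Rabs ((mu s - k s z - b) * x) <= L * D /\
    Rabs ((mu s - k s z - b) * z) <= L * D.
Proof.
  intros Hm Hg Hk Hss Hxs HDs Hgss E1 E2 E3.
  destruct (closed_loop_rates_calm mu g sin k ss xs lm lg Hm Hg Hk (conj Hss Hxs))
    as [rho [Cm [Cg [Lk [Hrho [Hrho1 [HCm [HCg [HLk Hcalm]]]]]]]]].
  set (A := Lk * sin + Ds + Cg * (xs + 1) + g ss).
  set (B := (Cm + Lk) * (xs + 1)).
  assert (HA : 0 <= A) by (unfold A; nra). assert (HB : 0 <= B) by (unfold B; nra).
  exists rho, (A + B + 1). split; [exact Hrho |]. split; [lra |].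
  intros s x z [[Hs1 Hs2] Hx] Hz A1 A2 A3 D.
  pose proof (Rabs_pos (s - ss)). pose proof (Rabs_pos (x - xs)). pose proof (Rabs_pos (z - xs)).
  destruct (Hcalm s z) as [Hmub [Hgb Hkb]]; [repeat split; lra | exact A1 | exact A3 |].
  rewrite <- E3 in Hkb.
  assert (Hmub' : Rabs (mu s - mu ss) <= Cm * D) by (unfold D in *; nra).
  assert (Hgb' : Rabs (g s - g ss) <= Cg * D) by (unfold D in *; nra).
  assert (Hkb' : Rabs (k s z - Ds) <= Lk * D) by (unfold D in *; nra).
  assert (Hxb : Rabs x <= xs + 1) by (apply Rabs_def2 in A2; rewrite Rabs_right; lra).
  assert (Hzb : Rabs z <= xs + 1) by (apply Rabs_def2 in A3; rewrite Rabs_right; lra).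
  assert (Hgr : Rabs (mu s - k s z - b) <= (Cm + Lk) * D).
  { replace (mu s - k s z - b) with ((mu s - mu ss) - (k s z - Ds)) by lra.
    eapply Rle_trans; [apply Rabs_triang | rewrite Rabs_Ropp; lra]. }
  assert (HD0 : 0 <= D) by (unfold D; lra).
  split; [| split].
  - (* the equilibrium relation Ds (sin - ss) = g ss xs centres the substrate field *)
    replace (k s z * (sin - s) - g s * x) with
      ((k s z - Ds) * (sin - s) - Ds * (s - ss) - (g s - g ss) * x - g ss * (x - xs)) by nra.
    eapply Rle_trans; [apply Rabs_sub4 |].
    assert (Hsin : Rabs (sin - s) <= sin) by (rewrite Rabs_right; lra).
    pose proof (Rabs_mult_le _ _ _ _ Hkb' Hsin). pose proof (Rabs_mult_le _ _ _ _ Hgb' Hxb).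
    rewrite (Rabs_mult Ds), (Rabs_mult (g ss)), (Rabs_right Ds), (Rabs_right (g ss)) by lra.
    assert (A * D <= (A + B + 1) * D) by nra. unfold A, D in *. nra.
  - eapply Rle_trans; [apply (Rabs_mult_le _ _ _ _ Hgr Hxb) |].
    replace ((Cm + Lk) * D * (xs + 1)) with (B * D) by (unfold B; ring). nra.
  - eapply Rle_trans; [apply (Rabs_mult_le _ _ _ _ Hgr Hzb) |].
    replace ((Cm + Lk) * D * (xs + 1)) with (B * D) by (unfold B; ring). nra.
Qed.

(** * Hybrid solutions after the first reset *)

Section HybridSolution.

Variables (mu g : R -> R) (b sin : R) (k : R -> R -> R) (r : R).
Hypothesis Hmu : forall s, 0 < s -> continuous mu s.
Hypothesis Hg : forall s, 0 < s -> continuous g s.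
Hypothesis Hgpos : forall s, 0 < s -> 0 < g s.
Hypothesis Hk : loc_lipschitz2 sin k.
Hypothesis Hr : 0 < r.
Variables (s x z : R -> R).
Hypothesis Hsol : hybrid_sol mu g b sin k r s x z.

Lemma hybrid_flow_piece (i : nat) : exists Sf Xf Zf,
  flow_piece mu g b sin k Sf Xf Zf (INR i * r) (INR (S i) * r) /\
  (forall t, INR i * r <= t < INR (S i) * r -> s t = Sf t /\ x t = Xf t /\ z t = Zf t) /\
  s (INR (S i) * r) = Sf (INR (S i) * r) /\ x (INR (S i) * r) = Xf (INR (S i) * r) /\
  z (INR (S i) * r) = x (INR (S i) * r).
Proof.
  destruct Hsol as [_ Hpieces].
  destruct (Hpieces i)
    as [Sf [Xf [Zf [Hd [Hder [H1 [H2 [H3 [H4 [H5 [H6 [Heq [Es [Ex Ez]]]]]]]]]]]]]].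
  assert (Hp : flow_piece mu g b sin k Sf Xf Zf (INR i * r) (INR (S i) * r)).
  { split; [rewrite S_INR; lra | tauto]. }
  exists Sf, Xf, Zf.
  split; [exact Hp | split; [exact Heq | split; [exact Es | split; [exact Ex |]]]].
  rewrite Ez, Ex. apply (flow_piece_reset mu g b sin k Sf Xf Zf); auto.
Qed.

Lemma hybrid_synchronized_piece (j : nat) :
  let a := INR (S j) * r in let c := INR (S (S j)) * r in
  exists Sc Xc : R -> R,
    (forall y, continuous Sc y /\ continuous Xc y) /\
    (forall y, in_dom2 sin (Sc y) (Xc y)) /\
    (forall t, a < t < c ->
       is_derive Sc t (k (Sc t) (Xc t) * (sin - Sc t) - g (Sc t) * Xc t) /\
       is_derive Xc t ((mu (Sc t) - k (Sc t) (Xc t) - b) * Xc t)) /\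
    (forall t, a <= t <= c -> s t = Sc t /\ x t = Xc t) /\
    (forall t, a <= t < c -> z t = x t).
Proof.
  intros a c.
  destruct (hybrid_flow_piece j) as [_ [_ [_ [_ [_ [_ [_ Hza]]]]]]].
  destruct (hybrid_flow_piece (S j)) as [Sf [Xf [Zf [Hp [Heq [Es [Ex _]]]]]]].
  fold a c in Hp, Heq, Es, Ex, Hza.
  pose proof (proj1 Hp) as Hac.
  assert (HZX : forall t, a <= t <= c -> Zf t = Xf t).
  { destruct (Heq a) as [_ [Xa Za]]; [lra |].
    assert (Hxa : 0 < Xf a) by (apply (proj1 (proj2 Hp)); lra).
    intros t Ht. pose proof (proj2 (flow_piece_reset mu g b sin k Sf Xf Zf a c
      Hmu Hg Hgpos Hk Hp) t Ht) as Hratio.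
    rewrite <- Za, Hza, Xa in Hratio. apply (Rmult_eq_reg_r (Xf a)); lra. }
  destruct (flow_piece_extend _ _ _ _ _ _ _ _ _ _ Hp) as [Hc [Hd Hder]].
  exists (extend a c Sf), (extend a c Xf). split; [| split; [| split; [| split]]].
  - intros y. split; apply Hc.
  - intros y. apply Hd.
  - intros t Ht. destruct (Hder t Ht) as [D1 [D2 _]].
    replace (extend a c Zf t) with (extend a c Xf t) in D1, D2
      by (rewrite !extend_id by lra; symmetry; apply HZX; lra).
    split; assumption.
  - intros t Ht. rewrite !extend_id by exact Ht.
    destruct (Rle_lt_or_eq_dec _ _ (proj2 Ht)) as [Hlt | ->]; [| auto].
    destruct (Heq t) as [-> [-> _]]; auto. lra.
  - intros t Ht. destruct (Heq t Ht) as [_ [-> ->]]. apply HZX. lra.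
Qed.

Lemma hybrid_z_eq_x (t : R) : r <= t -> z t = x t.
Proof.
  intros Ht. pose proof (period_index_spec r t Hr ltac:(lra)) as Hi.
  destruct (period_index r t) as [| j]; [simpl in Hi; lra |].
  destruct (hybrid_synchronized_piece j) as [_ [_ [_ [_ [_ [_ Hzx]]]]]]. exact (Hzx t Hi).
Qed.

Lemma hybrid_derive_inside (j : nat) (T : R) : INR (S j) * r < T < INR (S (S j)) * r ->
  is_derive s T (k (s T) (x T) * (sin - s T) - g (s T) * x T) /\
  is_derive x T ((mu (s T) - k (s T) (x T) - b) * x T).
Proof.
  intros HT. destruct (hybrid_synchronized_piece j) as [Sc [Xc [_ [_ [Hder [Heq _]]]]]].
  destruct (Hder T HT) as [DS DX]. destruct (Heq T) as [-> ->]; [lra |].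
  assert (Hloc : locally T (fun y => Sc y = s y /\ Xc y = x y)).
  { eapply filter_imp; [| apply locally_in_interval, HT].
    intros y Hy. destruct (Heq y) as [-> ->]; [lra | auto]. }
  split; (eapply is_derive_ext_loc; [| eassumption]);
    (eapply filter_imp; [| exact Hloc]); simpl; tauto.
Qed.

Lemma hybrid_derive_at_reset (m : nat) : let T := INR (S (S m)) * r in
  is_derive s T (k (s T) (x T) * (sin - s T) - g (s T) * x T) /\
  is_derive x T ((mu (s T) - k (s T) (x T) - b) * x T).
Proof.
  intros T.
  assert (Ha : INR (S m) * r = T - r) by (unfold T; rewrite (S_INR (S m)); ring).
  assert (Hc : INR (S (S (S m))) * r = T + r) by (unfold T; rewrite (S_INR (S (S m))); ring).
  destruct (hybrid_synchronized_piece m) as [Sl [Xl [Cl [Dl [Derl [Eql _]]]]]].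
  destruct (hybrid_synchronized_piece (S m)) as [Sr [Xr [Cr [Dr [Derr [Eqr _]]]]]].
  fold T in Eql, Derl, Eqr, Derr. rewrite Ha in Eql, Derl. rewrite Hc in Eqr, Derr.
  destruct (Eql T) as [SlT XlT]; [lra |]. destruct (Eqr T) as [SrT XrT]; [lra |].
  destruct (continuous_static_field mu g b sin k Sl Xl T Hmu Hg Hk Dl (proj1 (Cl T)) (proj2 (Cl T)))
    as [FSl FXl].
  destruct (continuous_static_field mu g b sin k Sr Xr T Hmu Hg Hk Dr (proj1 (Cr T)) (proj2 (Cr T)))
    as [FSr FXr].
  split; [ apply (is_derive_glue s Sl Sr
                (fun w => k (Sl w) (Xl w) * (sin - Sl w) - g (Sl w) * Xl w)
                (fun w => k (Sr w) (Xr w) * (sin - Sr w) - g (Sr w) * Xr w) T r)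
          | apply (is_derive_glue x Xl Xr
                (fun w => (mu (Sl w) - k (Sl w) (Xl w) - b) * Xl w)
                (fun w => (mu (Sr w) - k (Sr w) (Xr w) - b) * Xr w) T r) ];
    first [ lra | congruence | assumption | intros y; apply Cl | intros y; apply Cr
          | intros y Hy; (apply Eql || apply Eqr || apply Derl || apply Derr); lra ].
Qed.

Lemma hybrid_derive_after_first_reset (T : R) : r < T ->
  is_derive s T (k (s T) (x T) * (sin - s T) - g (s T) * x T) /\
  is_derive x T ((mu (s T) - k (s T) (x T) - b) * x T).
Proof.
  intros HT. pose proof (period_index_spec r T Hr ltac:(lra)) as Hi.
  destruct (period_index r T) as [| j]; [simpl in Hi; lra |].
  destruct (Rle_lt_or_eq_dec _ _ (proj1 Hi)) as [Hlt | Heq].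
  - apply (hybrid_derive_inside j). lra.
  - destruct j as [| m]; [simpl in Heq; lra |]. rewrite <- Heq. apply hybrid_derive_at_reset.
Qed.

Lemma hybrid_tail_static_sol : static_sol mu g b sin k (fun t => s (t + r)) (fun t => x (t + r)).
Proof.
  destruct (hybrid_synchronized_piece 0) as [Sc [Xc [Hc [_ [_ [Heq _]]]]]].
  simpl in Heq. rewrite Rmult_1_l in Heq.
  split; [| split; [| split]].
  - intros t Ht. apply Hsol. lra.
  - intros t Ht. destruct (hybrid_derive_after_first_reset (t + r)) as [DS DX]; [lra |].
    split; apply is_derive_shift; assumption.
  - apply (cont_right_of_agree _ (fun t => Sc (t + r)) 0 r Hr).
    + intros y Hy. apply Heq. lra.
    + apply (continuous_comp (fun t => t + r) Sc); [solve_continuous | apply Hc].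
  - apply (cont_right_of_agree _ (fun t => Xc (t + r)) 0 r Hr).
    + intros y Hy. apply Heq. lra.
    + apply (continuous_comp (fun t => t + r) Xc); [solve_continuous | apply Hc].
Qed.

Lemma hybrid_converges (ss xs : R) :
  (forall s x, static_sol mu g b sin k s x -> conv_to s ss /\ conv_to x xs) ->
  conv_to s ss /\ conv_to x xs /\ conv_to z xs.
Proof.
  intros Hconv. destruct (Hconv _ _ hybrid_tail_static_sol) as [Cs Cx].
  apply conv_to_unshift in Cs, Cx. split; [exact Cs | split; [exact Cx |]].
  apply (conv_to_eventually_eq x z r); [| exact Cx].
  intros t Ht. symmetry. apply hybrid_z_eq_x. lra.
Qed.

End HybridSolution.

(** * Stability *)

Section Stability.

Variables (mu g : R -> R) (b sin : R) (k : R -> R -> R) (r ss xs rho L : R).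
Hypothesis Hmu : forall s, 0 < s -> continuous mu s.
Hypothesis Hg : forall s, 0 < s -> continuous g s.
Hypothesis Hgpos : forall s, 0 < s -> 0 < g s.
Hypothesis Hk : loc_lipschitz2 sin k.
Hypothesis Hr : 0 < r.
Hypothesis HL : 0 < L.
Hypothesis Hrho : 0 < rho.
Hypothesis Hbound : forall s x z, in_dom2 sin s x -> 0 < z ->
  Rabs (s - ss) < rho -> Rabs (x - xs) < rho -> Rabs (z - xs) < rho ->
  let D := Rabs (s - ss) + Rabs (x - xs) + Rabs (z - xs) in
  Rabs (k s z * (sin - s) - g s * x) <= L * D /\
  Rabs ((mu s - k s z - b) * x) <= L * D /\
  Rabs ((mu s - k s z - b) * z) <= L * D.

Lemma flow_energy_bound (S X Z : R -> R) :
  (forall y, continuous S y /\ continuous X y /\ continuous Z y) ->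
  (forall y, in_dom2 sin (S y) (X y) /\ 0 < Z y) ->
  (forall t, 0 < t < r ->
     is_derive S t (k (S t) (Z t) * (sin - S t) - g (S t) * X t) /\
     is_derive X t ((mu (S t) - k (S t) (Z t) - b) * X t) /\
     is_derive Z t ((mu (S t) - k (S t) (Z t) - b) * Z t)) ->
  let V := fun t => (S t - ss) ^ 2 + (X t - xs) ^ 2 + (Z t - xs) ^ 2 in
  V 0 * exp (6 * L * r) < rho ^ 2 -> forall t, 0 <= t <= r -> V t <= V 0 * exp (6 * L * r).
Proof.
  intros Hc Hd Hder V Hsmall.
  assert (HVpos : forall t, 0 <= V t).
  { intros t. unfold V. pose proof (pow2_ge_0 (S t - ss)). pose proof (pow2_ge_0 (X t - xs)).
    pose proof (pow2_ge_0 (Z t - xs)). lra. }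
  set (F1 := fun t => k (S t) (Z t) * (sin - S t) - g (S t) * X t).
  set (F2 := fun t => (mu (S t) - k (S t) (Z t) - b) * X t).
  set (F3 := fun t => (mu (S t) - k (S t) (Z t) - b) * Z t).
  assert (Hgrowth : forall t, V t < rho ^ 2 ->
            2 * ((S t - ss) * F1 t + (X t - xs) * F2 t + (Z t - xs) * F3 t) <= 6 * L * V t).
  { intros t HVt. unfold V in HVt.
    pose proof (pow2_ge_0 (S t - ss)). pose proof (pow2_ge_0 (X t - xs)).
    pose proof (pow2_ge_0 (Z t - xs)). destruct (Hd t) as [Hdt Hzt].
    destruct (Hbound (S t) (X t) (Z t) Hdt Hzt) as [B1 [B2 B3]];
      try (apply Rabs_lt_of_sq; lra).
    pose proof (inner_le_of_linear_bound _ _ _ _ _ _ L (Rlt_le _ _ HL) B1 B2 B3).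
    unfold V, F1, F2, F3. lra. }
  intros t Ht. eapply Rle_trans.
  - apply (gronwall_below V
      (fun t => 2 * ((S t - ss) * F1 t + (X t - xs) * F2 t + (Z t - xs) * F3 t))
      (6 * L) (rho ^ 2) r);
      [lra | apply HVpos | | | exact Hgrowth | exact Hsmall | exact Ht].
    + intros y. destruct (Hc y) as [? [? ?]]. unfold V. solve_continuous.
    + intros u Hu. destruct (Hder u Hu) as [? [? ?]]. unfold V, F1, F2, F3. solve_derive.
  - apply Rmult_le_compat_l; [apply HVpos |].
    destruct (Rle_lt_or_eq_dec t r (proj2 Ht)) as [Hlt | ->]; [| lra].
    left. apply exp_increasing. nra.
Qed.

Lemma hybrid_first_period_bound (s x z : R -> R) :
  hybrid_sol mu g b sin k r s x z ->
  let V0 := (s 0 - ss) ^ 2 + (x 0 - xs) ^ 2 + (z 0 - xs) ^ 2 in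
  V0 * exp (6 * L * r) < rho ^ 2 ->
  (forall t, 0 <= t < r ->
     (s t - ss) ^ 2 + (x t - xs) ^ 2 + (z t - xs) ^ 2 <= V0 * exp (6 * L * r)) /\
  (s r - ss) ^ 2 + (x r - xs) ^ 2 <= V0 * exp (6 * L * r).
Proof.
  intros Hsol V0 Hsmall.
  destruct (hybrid_flow_piece mu g b sin k r Hmu Hg Hgpos Hk Hr s x z Hsol 0)
    as [Sf [Xf [Zf [Hp [Heq [Es [Ex _]]]]]]].
  replace (INR 0 * r) with 0 in Hp, Heq by (simpl; ring).
  replace (INR 1 * r) with r in Hp, Heq, Es, Ex by (simpl; ring).
  destruct (flow_piece_extend _ _ _ _ _ _ _ _ _ _ Hp) as [Hc [Hd Hder]].
  assert (Hid : forall t, 0 <= t < r ->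
            s t = extend 0 r Sf t /\ x t = extend 0 r Xf t /\ z t = extend 0 r Zf t).
  { intros t Ht. rewrite !extend_id by lra. apply Heq, Ht. }
  pose proof (flow_energy_bound _ _ _ Hc Hd Hder) as Hbelow. cbv beta zeta in Hbelow.
  destruct (Hid 0) as [H0s [H0x H0z]]; [lra |].
  rewrite <- H0s, <- H0x, <- H0z in Hbelow. fold V0 in Hbelow.
  split.
  - intros t Ht. destruct (Hid t Ht) as [-> [-> ->]]. apply Hbelow; [exact Hsmall | lra].
  - rewrite Es, Ex, <- (extend_id Sf 0 r r), <- (extend_id Xf 0 r r) by lra.
    pose proof (Hbelow Hsmall r ltac:(lra)). pose proof (pow2_ge_0 (extend 0 r Zf r - xs)). lra.
Qed.

Lemma hybrid_stable :
  (forall eps, 0 < eps -> exists del, 0 < del /\ forall s x, static_sol mu g b sin k s x ->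
     dist2 (s 0) (x 0) ss xs < del -> forall t, 0 <= t -> dist2 (s t) (x t) ss xs < eps) ->
  forall eps, 0 < eps -> exists del, 0 < del /\
    forall s x z, hybrid_sol mu g b sin k r s x z ->
    dist3 (s 0) (x 0) (z 0) ss xs xs < del ->
    forall t, 0 <= t -> dist3 (s t) (x t) (z t) ss xs xs < eps.
Proof.
  intros Hstatic eps Heps.
  destruct (Hstatic (eps / 2)) as [del1 [Hdel1 Hst]]; [lra |].
  set (m := Rmin rho (Rmin eps del1)).
  assert (Hm : 0 < m /\ m <= rho /\ m <= eps /\ m <= del1).
  { unfold m. repeat split; [repeat apply Rmin_pos; lra | ..];
      repeat (apply Rmin_l || apply Rle_refl || (eapply Rle_trans; [apply Rmin_r |])). }
  destruct Hm as [Hm0 [Hmrho [Hmeps Hmdel]]].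
  assert (Hm2 : m ^ 2 <= rho ^ 2 /\ m ^ 2 <= eps ^ 2 /\ m ^ 2 <= del1 ^ 2)
    by (repeat split; apply pow_incr; lra).
  (* the first period amplifies squared distances by at most exp (6 L r) *)
  exists (m * exp (- (3 * L * r))). split; [apply Rmult_lt_0_compat; [lra | apply exp_pos] |].
  intros s x z Hsol H0 t Ht.
  apply dist3_lt_iff in H0; [| apply Rmult_lt_0_compat; [lra | apply exp_pos]].
  apply dist3_lt_iff; [exact Heps |].
  assert (Hsmall : ((s 0 - ss) ^ 2 + (x 0 - xs) ^ 2 + (z 0 - xs) ^ 2) * exp (6 * L * r) < m ^ 2).
  { rewrite <- (sqr_mul_exp_opp m (3 * L * r)). replace (6 * L * r) with (2 * (3 * L * r)) by ring.
    apply Rmult_lt_compat_r; [apply exp_pos | exact H0]. }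
  destruct (hybrid_first_period_bound s x z Hsol) as [Hfirst Hend]; [lra |].
  destruct (Rlt_or_le t r) as [Htr | Hrt]; [pose proof (Hfirst t (conj Ht Htr)); lra |].
  assert (Hstart : dist2 (s (0 + r)) (x (0 + r)) ss xs < del1)
    by (rewrite Rplus_0_l; apply dist2_lt_iff; lra).
  pose proof (Hst _ _ (hybrid_tail_static_sol mu g b sin k r Hmu Hg Hgpos Hk Hr s x z Hsol)
    Hstart (t - r) ltac:(lra)) as Htail.
  simpl in Htail. replace (t - r + r) with t in Htail by ring.
  apply dist2_lt_iff in Htail; [| lra].
  rewrite (hybrid_z_eq_x mu g b sin k r Hmu Hg Hgpos Hk Hr s x z Hsol t Hrt).
  pose proof (pow2_ge_0 (s t - ss)). nra.
Qed.

End Stability.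

(** * Existence *)

Record state := State { st_s : R; st_x : R; st_z : R }.
Record trajectory := Trajectory { tr_s : R -> R; tr_x : R -> R; tr_z : R -> R }.

Section Construction.

Variables (mu g : R -> R) (b sin : R) (k : R -> R -> R) (r : R).
Hypothesis Hmu : forall s, 0 < s -> continuous mu s.
Hypothesis Hg : forall s, 0 < s -> continuous g s.
Hypothesis Hgpos : forall s, 0 < s -> 0 < g s.
Hypothesis Hk : loc_lipschitz2 sin k.
Hypothesis Hr : 0 < r.
Hypothesis HFC : forward_complete_dyn mu g b sin k.

Definition admissible_state (p : state) : Prop := in_dom2 sin (st_s p) (st_x p) /\ 0 < st_z p.

Definition solves_from (p : state) (q : trajectory) : Prop :=
  dyn_sol mu g b sin k (tr_s q) (tr_x q) (tr_z q) /\
  tr_s q 0 = st_s p /\ tr_x q 0 = st_x p /\ tr_z q 0 = st_z p.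

Lemma exists_dyn_trajectory (p : state) :
  exists q, admissible_state p -> solves_from p q.
Proof.
  destruct (classic (admissible_state p)) as [[Hd Hz] | Hn].
  - destruct (HFC _ _ _ Hd Hz) as [s [x [z Hsol]]]. now exists (Trajectory s x z).
  - exists (Trajectory id id id). intros H. contradiction.
Qed.

Definition dyn_trajectory (p : state) : trajectory :=
  proj1_sig (constructive_indefinite_description _ (exists_dyn_trajectory p)).

Lemma dyn_trajectory_spec (p : state) : admissible_state p -> solves_from p (dyn_trajectory p).
Proof. apply (proj2_sig (constructive_indefinite_description _ (exists_dyn_trajectory p))). Qed.

(** The observer is reset to the biomass, which is what the exact reset value turns out to be. *)
Fixpoint reset_state (p0 : state) (i : nat) : state :=
  match i with
  | O => p0
  | S j => let q := dyn_trajectory (reset_state p0 j) in State (tr_s q r) (tr_x q r) (tr_x q r)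
  end.

Lemma reset_state_admissible (p0 : state) : admissible_state p0 ->
  forall i, admissible_state (reset_state p0 i).
Proof.
  intros H0 i. induction i as [| i IH]; [exact H0 |].
  destruct (dyn_trajectory_spec _ IH) as [[Hd _] _]. destruct (Hd r) as [H1 H2]; [lra |].
  split; [exact H1 | apply H1].
Qed.

Definition glued (proj : trajectory -> R -> R) (p0 : state) (t : R) : R :=
  let i := period_index r t in proj (dyn_trajectory (reset_state p0 i)) (t - INR i * r).

Lemma shifted_flow_piece (q : trajectory) (a c : R) : c = a + r ->
  dyn_sol mu g b sin k (tr_s q) (tr_x q) (tr_z q) ->
  flow_piece mu g b sin k (fun t => tr_s q (t - a)) (fun t => tr_x q (t - a))
    (fun t => tr_z q (t - a)) a c.
Proof.
  intros -> [Hd [Hder [H1 [H2 H3]]]].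
  destruct (Hder r Hr) as [Ds [Dx Dz]].
  assert (Hcl : forall f l, is_derive f r l -> cont_left (fun t => f (t - a)) (a + r)).
  { intros f l Hf. apply cont_left_of_continuous.
    apply (continuous_comp (fun t => t - a) f); [solve_continuous |].
    replace (a + r - a) with r by ring. eapply is_derive_continuous, Hf. }
  split; [lra | split; [| split]].
  - intros t Ht. apply Hd. lra.
  - intros t Ht. destruct (Hder (t - a)) as [D1 [D2 D3]]; [lra |].
    split; [| split]; apply (is_derive_shift _ (- a)); assumption.
  - repeat split; try (apply cont_right_shift; assumption); eapply Hcl; eassumption.
Qed.

Lemma glued_in_period (proj : trajectory -> R -> R) (p0 : state) (i : nat) (t : R) :
  INR i * r <= t < INR (S i) * r ->
  glued proj p0 t = proj (dyn_trajectory (reset_state p0 i)) (t - INR i * r).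
Proof. intros Ht. unfold glued. now rewrite (period_index_unique r t i Hr Ht). Qed.

Lemma glued_hybrid_sol (p0 : state) : admissible_state p0 ->
  hybrid_sol mu g b sin k r (glued tr_s p0) (glued tr_x p0) (glued tr_z p0).
Proof.
  intros H0. split.
  - intros t Ht. pose proof (period_index_spec r t Hr Ht) as Hi.
    rewrite !(glued_in_period _ p0 _ t Hi).
    destruct (dyn_trajectory_spec _ (reset_state_admissible p0 H0 (period_index r t)))
      as [[Hd _] _].
    apply Hd. lra.
  - intros i a c. set (q := dyn_trajectory (reset_state p0 i)).
    destruct (dyn_trajectory_spec _ (reset_state_admissible p0 H0 i)) as [Hdyn _].
    destruct (dyn_trajectory_spec _ (reset_state_admissible p0 H0 (S i))) as [_ [Is [Ix Iz]]].
    fold q in Hdyn. assert (Hca : c = a + r) by (unfold a, c; rewrite S_INR; ring).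
    pose proof (shifted_flow_piece q a c Hca Hdyn) as Hp.
    destruct (flow_piece_reset _ _ _ _ _ _ _ _ _ _ Hmu Hg Hgpos Hk Hp) as [Hreset _].
    assert (Hc : forall proj, glued proj p0 c = proj (dyn_trajectory (reset_state p0 (S i))) 0).
    { intros proj. rewrite (glued_in_period proj p0 (S i) c).
      - unfold c. rewrite Rminus_diag. reflexivity.
      - unfold c. rewrite (S_INR (S i)). lra. }
    exists (fun t => tr_s q (t - a)), (fun t => tr_x q (t - a)), (fun t => tr_z q (t - a)).
    destruct Hp as [_ Hp]. do 8 (split; [apply Hp |]).
    replace (c - a) with r by lra. split; [| split; [| split]].
    + intros t Ht. rewrite !(glued_in_period _ p0 i t Ht). auto.
    + now rewrite Hc, Is.
    + now rewrite Hc, Ix.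
    + rewrite Hreset, Hc, Iz. simpl. now replace (c - a) with r by lra.
Qed.

Lemma glued_initial (p0 : state) : admissible_state p0 ->
  glued tr_s p0 0 = st_s p0 /\ glued tr_x p0 0 = st_x p0 /\ glued tr_z p0 0 = st_z p0.
Proof.
  intros H0. destruct (dyn_trajectory_spec _ H0) as [_ Hinit].
  rewrite !(glued_in_period _ p0 0 0) by (simpl; lra). simpl. rewrite Rmult_0_l, Rminus_0_r.
  exact Hinit.
Qed.

Lemma hybrid_exists (s0 x0 z0 : R) : in_dom2 sin s0 x0 -> 0 < z0 ->
  exists s x z, hybrid_sol mu g b sin k r s x z /\ s 0 = s0 /\ x 0 = x0 /\ z 0 = z0.
Proof.
  intros Hd Hz. set (p0 := State s0 x0 z0).
  assert (H0 : admissible_state p0) by (split; assumption).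
  exists (glued tr_s p0), (glued tr_x p0), (glued tr_z p0).
  split; [apply glued_hybrid_sol, H0 | apply glued_initial, H0].
Qed.

End Construction.

Theorem proposition3p1
  (mu g : R -> R) (b sin : R) (k : R -> R -> R) (ss xs Ds : R)
  (Hmu : admissible_rate mu) (Hg : admissible_rate g)
  (Hb : 0 <= b) (Hsin : 0 < sin)
  (Hss : 0 < ss < sin) (Hxs : 0 < xs) (HDs : 0 < Ds)
  (Heq1 : mu ss = Ds + b) (Heq2 : Ds * (sin - ss) = g ss * xs)
  (Hkpos : forall s x, in_dom2 sin s x -> 0 < k s x)
  (Hklip : loc_lipschitz2 sin k)
  (HkDs : Ds = k ss xs)
  (HGAS : GAS_static mu g b sin k ss xs)
  (HFC : forward_complete_dyn mu g b sin k) :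
  forall r : R, 0 < r -> GAS_hybrid mu g b sin k r ss xs.
Proof.
  intros r Hr.
  pose proof (admissible_rate_continuous mu Hmu) as Hmuc.
  pose proof (admissible_rate_continuous g Hg) as Hgc.
  destruct Hg as [[dg [Hdg _]] [Hgnn [_ [_ Hgpos]]]].
  destruct Hmu as [[dmu [Hdmu _]] _].
  destruct HGAS as [Hstatic [_ Hconv]].
  split; [| split].
  - destruct (closed_loop_field_linear_bound mu g b sin k ss xs Ds (dmu ss) (dg ss)
      (Hdmu ss (proj1 Hss)) (Hdg ss (proj1 Hss)) Hklip Hss Hxs HDs (Hgnn ss ltac:(lra))
      Heq1 Heq2 HkDs) as [rho [L [Hrho [HL Hbound]]]].
    exact (hybrid_stable mu g b sin k r ss xs rho L Hmuc Hgc Hgpos Hklip Hr HL Hrho Hbound Hstatic).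
  - exact (hybrid_exists mu g b sin k r Hmuc Hgc Hgpos Hklip Hr HFC).
  - intros s x z Hsol.
    exact (hybrid_converges mu g b sin k r Hmuc Hgc Hgpos Hklip Hr s x z Hsol ss xs Hconv).
Qed.
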